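(* For all integers $n>1$ and $i\ge1$, and every primitive $n$-th root of unity $\omega_n$, $S_n(\omega_n^i)=S_{\gcd(s_n,i)}(1)$ and $G_n(\omega_n^i)=G_{\gcd(g_n,i)}(1)$.
   Context: $\Phi_k(q)$ is the $k$-th cyclotomic polynomial. For $n>1$ let $s_n$ be the smallest prime factor of $n$ and $g_n$ the greatest prime factor of $n$. Define $S_1(q)=G_1(q)=\Phi_1(q)=q-1$, and for $n>1$, $S_n(q)=\Phi_{s_n}(q^{n/s_n})$ and $G_n(q)=\Phi_{g_n}(q^{n/g_n})$. *)

From mathcomp Require Import all_boot all_order all_algebra all_field.
Set Implicit Arguments. Unset Strict Implicit. Unset Printing Implicit Defensive.
Import Order.TTheory GRing.Theory Num.Theory.
Local Open Scope ring_scope.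

Definition Phi (k : nat) (q : algC) : algC := (map_poly intr 'Phi_k).[q].

(* s_n = pdiv n (smallest prime factor), g_n = max_pdiv n (greatest). *)
Definition S (n : nat) (q : algC) : algC :=
  if n == 1%N then Phi 1 q else Phi (pdiv n) (q ^+ (n %/ pdiv n)).

Definition G (n : nat) (q : algC) : algC :=
  if n == 1%N then Phi 1 q else Phi (max_pdiv n) (q ^+ (n %/ max_pdiv n)).

From mathcomp Require Import all_boot all_order all_algebra all_field.
Import GRing.Theory Num.Theory.
Local Open Scope ring_scope.

(* For a prime p dividing n, the number z := w ^+ (n %/ p) is a primitive p-th
   root of unity, so S_n and G_n evaluate Phi_p = 1 + X + ... + X^(p-1) at the
   p-th root of unity z ^+ i.  That sum is p when z ^+ i = 1, i.e. when p | i,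
   and 0 otherwise; these are exactly Phi_p(1) and Phi_1(1), the values of
   S_d(1) and G_d(1) for d = gcd(p, i). *)

Lemma divisors_prime p : prime p -> perm_eq (divisors p) [:: 1%N; p].
Proof.
move=> p_pr; apply: uniq_perm; first exact: divisors_uniq.
  by rewrite /= inE andbT neq_ltn prime_gt1.
move=> d; rewrite -dvdn_divisors ?prime_gt0 // !inE.
have [-> | d_neq1] := eqVneq d 1%N; first by rewrite dvd1n.
exact/(prime_nt_dvdP p_pr d_neq1)/eqP.
Qed.

Lemma Cyclotomic1 : 'Phi_1 = 'X - 1.
Proof.
have := prod_Cyclotomic (ltn0Sn 0).
by rewrite (_ : divisors 1 = [:: 1%N]) // big_seq1 expr1.
Qed.

Lemma Cyclotomic_prime p : prime p -> 'Phi_p = \sum_(k < p) 'X^k.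
Proof.
move=> p_pr; have := prod_Cyclotomic (prime_gt0 p_pr).
rewrite (perm_big _ (divisors_prime p p_pr)) /= big_cons big_seq1 Cyclotomic1.
by rewrite subrX1; apply: mulfI; rewrite -polyC1 polyXsubC_eq0.
Qed.

Lemma Phi1 x : Phi 1 x = x - 1.
Proof. by rewrite /Phi Cyclotomic1 rmorphB /= map_polyX rmorph1 !hornerE. Qed.

Lemma Phi_prime p x : prime p -> Phi p x = \sum_(k < p) x ^+ k.
Proof.
move=> p_pr; rewrite /Phi Cyclotomic_prime // rmorph_sum horner_sum.
by apply: eq_bigr => k _; rewrite rmorphXn /= map_polyX hornerXn.
Qed.

Lemma sum_unity_root (R : idomainType) p (x : R) : x ^+ p = 1 ->
  \sum_(k < p) x ^+ k = if x == 1 then p%:R else 0.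
Proof.
move=> xp1; have [-> | x_neq1] := eqVneq x 1.
  by under eq_bigr do rewrite expr1n; rewrite sumr_const card_ord.
have := subrX1 x p; rewrite xp1 subrr => /esym/eqP.
by rewrite mulf_eq0 subr_eq0 (negbTE x_neq1) => /eqP.
Qed.

Lemma Phi_prim_root_exp p n i w : prime p -> (p %| n)%N ->
  n.-primitive_root w -> Phi p ((w ^+ i) ^+ (n %/ p)) = Phi (gcdn p i) 1.
Proof.
move=> p_pr p_dvd_n w_prim.
have z_prim : p.-primitive_root (w ^+ (n %/ p)) by exact: dvdn_prim_root.
rewrite Phi_prime // exprAC; set z := w ^+ (n %/ p).
rewrite sum_unity_root; last by rewrite exprAC (prim_expr_order z_prim) expr1n.
rewrite -(prim_order_dvd z_prim).
have [p_dvd_i | p_ndvd_i] := boolP (p %| i)%N.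
  by rewrite (gcdn_idPl p_dvd_i) Phi_prime // sum_unity_root ?expr1n ?eqxx.
have /eqP -> : coprime p i by rewrite prime_coprime.
by rewrite Phi1 subrr.
Qed.

Lemma gcdn_prime_eq1_or_prime p i : prime p ->
  (gcdn p i == 1)%N || prime (gcdn p i).
Proof.
move=> p_pr; have [p_dvd_i | p_ndvd_i] := boolP (p %| i)%N.
  by rewrite (gcdn_idPl p_dvd_i) p_pr orbT.
by rewrite -/(coprime p i) prime_coprime // p_ndvd_i.
Qed.

Lemma S_gt1 n q : (1 < n)%N -> S n q = Phi (pdiv n) (q ^+ (n %/ pdiv n)).
Proof. by move=> n_gt1; rewrite /S gtn_eqF. Qed.

Lemma G_gt1 n q : (1 < n)%N ->
  G n q = Phi (max_pdiv n) (q ^+ (n %/ max_pdiv n)).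
Proof. by move=> n_gt1; rewrite /G gtn_eqF. Qed.

Lemma S_Phi d q : (d == 1)%N || prime d -> S d q = Phi d q.
Proof.
rewrite /S; case: eqP => [-> // | _ /= d_pr].
by rewrite pdiv_id // divnn prime_gt0 // expr1.
Qed.

Lemma G_Phi d q : (d == 1)%N || prime d -> G d q = Phi d q.
Proof.
rewrite /G; case: eqP => [-> // | _ /= d_pr].
by rewrite /max_pdiv primes_prime //= divnn prime_gt0 // expr1.
Qed.

Theorem theorem12 (n i : nat) (w : algC) :
  (1 < n)%N -> (1 <= i)%N -> n.-primitive_root w ->
  S n (w ^+ i) = S (gcdn (pdiv n) i) 1 /\
  G n (w ^+ i) = G (gcdn (max_pdiv n) i) 1.
Proof.
move=> n_gt1 _ w_prim; split.
  rewrite S_gt1 // Phi_prim_root_exp ?pdiv_dvd ?pdiv_prime // S_Phi //.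
  exact/gcdn_prime_eq1_or_prime/pdiv_prime.
rewrite G_gt1 // Phi_prim_root_exp ?max_pdiv_dvd ?max_pdiv_prime // G_Phi //.
exact/gcdn_prime_eq1_or_prime/max_pdiv_prime.
Qed.
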